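(* Let $x_1,\dots,x_N\in\mathbb{R}^M$ and $y_1,\dots,y_N\in\mathbb{R}$, and let $X_N=[x_1\ \cdots\ x_N]^\top\in\mathbb{R}^{N\times M}$ and $Y_N=[y_1\ \cdots\ y_N]^\top\in\mathbb{R}^N$. Let $\theta_{MN}=X_N^+Y_N$ be the minimum-norm least-squares solution. Let $x\in\mathbb{R}^M$ be a test vector and $y\in\mathbb{R}$ a test label, and set $$\|x_\perp\|^2 := x^\top\left[I-X_N^+X_N\right]x,$$ assumed nonzero. Let $X_{N+1}=[x_1\ \cdots\ x_N\ x]^\top$, $Y_{N+1}=[y_1\ \cdots\ y_N\ y]^\top$, and let $\theta_{N+1}=X_{N+1}^+Y_{N+1}$ be the minimum-norm least-squares solution based on the $N+1$ samples. Then $$\|\theta_{N+1}\|^2=\|\theta_{MN}\|^2+\frac{1}{\|x_\perp\|^2}\left(y-x^\top\theta_{MN}\right)^2 .$$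
   Context: $\|\cdot\|$ is the Euclidean norm. For a data matrix $X$ with $N$ rows and $M$ columns, the pseudo-inverse is $X^+=(X^\top X)^{-1}X^\top$ if $\mathrm{rank}(X^\top X)=M$, and $X^+=X^\top(XX^\top)^{-1}$ otherwise (the Moore–Penrose pseudo-inverse in these full-rank cases). *)

From HB Require Import structures.
From mathcomp Require Import all_boot all_order all_algebra.
Set Implicit Arguments. Unset Strict Implicit. Unset Printing Implicit Defensive.
Import Order.TTheory GRing.Theory Num.Theory.
Local Open Scope ring_scope.

(* P is the Moore--Penrose pseudo-inverse of A (real matrices, so the
   adjoint is the transpose): the four Penrose conditions. *)
Definition is_MP_pinv (R : realFieldType) (m n : nat)
  (A : 'M[R]_(m, n)) (P : 'M[R]_(n, m)) : Prop :=
  [/\ A *m P *m A = A, P *m A *m P = P,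
      (A *m P)^T = A *m P & (P *m A)^T = P *m A].

Definition sqnorm (R : realFieldType) (n : nat) (v : 'cV[R]_n) : R :=
  \sum_(i < n) v i 0 ^+ 2.

(* With Pi = I - X^+ X the orthogonal projector onto the kernel of X and
   u = Pi x, the vector theta_MN + c / |x_perp|^2 * u (c the residual of the
   new sample) fits all N + 1 samples exactly and lies in the row space of
   the enlarged data matrix, hence it is theta_(N+1).  Since theta_MN lies in
   the row space of X and u in its kernel, Pythagoras gives the norm, using
   |u|^2 = x^T Pi x = |x_perp|^2. *)
From HB Require Import structures.
From mathcomp Require Import all_boot all_order all_algebra.
From mathcomp Require Import ring.
Set Implicit Arguments. Unset Strict Implicit. Unset Printing Implicit Defensive.
Import Order.TTheory GRing.Theory Num.Theory.
Local Open Scope ring_scope.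

Section SquaredNorm.

Variables (R : realFieldType) (n : nat).
Implicit Types (u v : 'cV[R]_n) (a : R).

Lemma sqnormE v : sqnorm v = (v^T *m v) 0 0.
Proof. by rewrite /sqnorm mxE; apply: eq_bigr => i _; rewrite !mxE expr2. Qed.

Lemma sqnormZ a v : sqnorm (a *: v) = a ^+ 2 * sqnorm v.
Proof.
by rewrite /sqnorm mulr_sumr; apply: eq_bigr => i _; rewrite mxE exprMn.
Qed.

Lemma sqnormD_orth u v : u^T *m v = 0 -> sqnorm (u + v) = sqnorm u + sqnorm v.
Proof.
move=> uv0; have vu0 : v^T *m u = 0 by rewrite -[LHS]trmxK trmx_mul trmxK uv0 trmx0.
rewrite !sqnormE [(u + v)^T]linearD /= mulmxDl !mulmxDr uv0 vu0 addr0 add0r.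
by rewrite mxE.
Qed.

End SquaredNorm.

Section PseudoInverse.

Variables (R : realFieldType) (m n : nat) (A : 'M[R]_(m, n)) (P : 'M[R]_(n, m)).
Hypothesis pinvAP : is_MP_pinv A P.

Lemma pinv_mul_normal_solution (b : 'cV[R]_m) (phi : 'cV[R]_n) (w : 'cV[R]_m) :
  A^T *m A *m phi = A^T *m b -> phi = A^T *m w -> P *m b = phi.
Proof.
case: pinvAP => APA PAP APsym PAsym normal_phi phi_row.
have phi_fixed : phi = P *m A *m phi.
  by rewrite phi_row -{1}APA -mulmxA trmx_mul PAsym !mulmxA.
have -> : P *m b = P *m A *m P *m A *m phi.
  transitivity (P *m (A *m P)^T *m b); first by rewrite APsym !mulmxA PAP.
  rewrite trmx_mul -!mulmxA -normal_phi.
  by rewrite !mulmxA -(mulmxA P) -trmx_mul APsym !mulmxA.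
by rewrite PAP -phi_fixed.
Qed.

Definition null_proj : 'M[R]_n := 1%:M - P *m A.

Lemma mul_null_proj : A *m null_proj = 0.
Proof. by case: pinvAP => APA _ _ _; rewrite mulmxBr mulmx1 mulmxA APA subrr. Qed.

Lemma null_projT : null_proj^T = null_proj.
Proof. by case: pinvAP => _ _ _ PAsym; rewrite linearB /= trmx1 PAsym. Qed.

Lemma null_proj_idem : null_proj *m null_proj = null_proj.
Proof.
by rewrite {1}/null_proj mulmxBl mul1mx -mulmxA mul_null_proj mulmx0 subr0.
Qed.

Lemma trpinv_mul_null_proj : P^T *m null_proj = 0.
Proof.
case: pinvAP => _ PAP _ _.
by rewrite -null_projT -trmx_mul mulmxBl mul1mx PAP subrr trmx0.
Qed.

Lemma sqnorm_null_proj_mul (x : 'cV[R]_n) :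
  sqnorm (null_proj *m x) = (x^T *m null_proj *m x) 0 0.
Proof.
rewrite sqnormE trmx_mul null_projT !mulmxA.
by rewrite -(mulmxA _ null_proj null_proj) null_proj_idem.
Qed.

End PseudoInverse.

Section AppendRow.

Variables (R : realFieldType) (m n : nat) (A : 'M[R]_(m, n)) (P : 'M[R]_(n, m)).
Variables (x : 'cV[R]_n) (P1 : 'M[R]_(n, m + 1)).
Hypotheses (pinvAP : is_MP_pinv A P) (pinvAxP1 : is_MP_pinv (col_mx A x^T) P1).

Let Pi := null_proj A P.
Let s := (x^T *m Pi *m x) 0 0.
Hypothesis s_neq0 : s != 0.

Lemma pinv_col_mx_mul (b : 'cV[R]_m) (y : R) :
  let theta := P *m b in
  P1 *m col_mx b y%:M = theta + ((y - (x^T *m theta) 0 0) / s) *: (Pi *m x).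
Proof.
move=> theta; set k := (_ - _) / s; set phi := theta + _.
have [APA PAP APsym PAsym] := pinvAP.
pose w := col_mx (P^T *m theta - k *: (P^T *m x)) (k%:M : 'cV_1).
apply: (pinv_mul_normal_solution pinvAxP1 (w := w)).
- have A_phi : A *m phi = A *m theta.
    rewrite mulmxDr -scalemxAr (mulmxA A Pi) mul_null_proj //.
    by rewrite mul0mx scaler0 addr0.
  have x_phi : x^T *m phi = y%:M.
    rewrite mulmxDr -scalemxAr (mulmxA x^T Pi) [x^T *m Pi *m x]mx11_scalar.
    rewrite [x^T *m theta]mx11_scalar scale_scalar_mx -raddfD /= /k divfK //.
    by congr (_%:M); ring.
  rewrite tr_col_mx trmxK -mulmxA mul_col_mx !mul_row_col A_phi x_phi.
  by rewrite /theta (mulmxA A) -APsym (mulmxA A^T) -trmx_mul APA.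
- rewrite tr_col_mx mul_row_col trmxK mul_mx_scalar mulmxBr -scalemxAr.
  rewrite /w !mulmxA -trmx_mul PAsym /theta PAP /phi /Pi /null_proj.
  by rewrite mulmxBl mul1mx scalerBr addrA addrAC.
Qed.

End AppendRow.

Theorem theorem3 (R : realFieldType) (M N : nat)
  (X : 'M[R]_(N, M)) (Y : 'cV[R]_N) (x : 'cV[R]_M) (y : R)
  (PN : 'M[R]_(M, N)) (PN1 : 'M[R]_(M, N + 1)) :
  is_MP_pinv X PN ->
  is_MP_pinv (col_mx X x^T) PN1 ->
  let thetaMN := PN *m Y in
  let thetaN1 := PN1 *m col_mx Y (y%:M : 'cV[R]_1) in
  let xperp2 := (x^T *m (1%:M - PN *m X) *m x) 0 0 in
  xperp2 != 0 ->
  sqnorm thetaN1 = sqnorm thetaMN + xperp2^-1 * (y - (x^T *m thetaMN) 0 0) ^+ 2.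
Proof.
move=> pinvX pinvXx thetaMN thetaN1 xperp2 xperp2_neq0.
have orth : thetaMN^T *m (null_proj X PN *m x) = 0.
  by rewrite trmx_mul !mulmxA -(mulmxA Y^T) trpinv_mul_null_proj // mulmx0 mul0mx.
rewrite /thetaN1 (pinv_col_mx_mul pinvX pinvXx) // sqnormD_orth; last first.
  by rewrite -scalemxAr orth scaler0.
rewrite sqnormZ sqnorm_null_proj_mul // -/xperp2.
by field.
Qed.
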